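(* Let $q\ge 7$ be a prime power, $m=\lceil (q+1)/2\rceil$, and suppose $\mathcal{H}=\{h_1,\dots,h_m\}\subseteq\mathbb{F}_q^3$ is a short covering of $\mathbb{F}_q^3$. Then: (1) some vector of $\mathcal{H}$ has weight $3$; (2) for each $j\in\{1,2,3\}$ there is $h_k\in\mathcal{H}$ with $\pi_j(h_k)=0$; (3) $\mathcal{H}$ is $\mathbb{F}_q$-equivalent to a set of one of the following two forms: $\mathcal{H}_1=\{(1,1,1),(0,*,* ),( *,0,* ),( *,*,0),h_5,\dots,h_m\}$ or $\mathcal{H}_2=\{(1,1,1),(0,*,* ),( *,0,0),h_4,\dots,h_m\}$, where each $*$ denotes an arbitrary element of $\mathbb{F}_q$ and the $h_i$ denote arbitrary vectors of $\mathbb{F}_q^3$.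
   Context: $\mathbb{F}_q$ is the finite field with $q$ elements. Hamming distance $d(u,v)=|\{i:u_i\ne v_i\}|$; $B(u)=\{v:d(u,v)\le1\}$; $E(u)=\bigcup_{\lambda\in\mathbb{F}_q}B(\lambda u)$. $\mathcal{H}\subseteq\mathbb{F}_q^3$ is a short covering of $\mathbb{F}_q^3$ if $\bigcup_{h\in\mathcal{H}}E(h)=\mathbb{F}_q^3$. The weight of $u$ is $\omega(u)=|\{i:u_i\ne0\}|$, and $\pi_j(u_1,u_2,u_3)=u_j$. Two subsets of $\mathbb{F}_q^3$ are $\mathbb{F}_q$-equivalent if one is mapped onto the other by a map of the form $(u_1,u_2,u_3)\mapsto(a_1u_{\varphi(1)},a_2u_{\varphi(2)},a_3u_{\varphi(3)})$ with $\varphi$ a permutation of $\{1,2,3\}$ and $a_1,a_2,a_3\in\mathbb{F}_q^*$ (the action of the wreath product of $\mathbb{F}_q^*$ by $S_3$). *)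

From HB Require Import structures.
From mathcomp Require Import all_boot all_order all_algebra all_fingroup.
Set Implicit Arguments. Unset Strict Implicit. Unset Printing Implicit Defensive.
Import GRing.Theory.
Local Open Scope ring_scope.

(* Vectors of F_q^3 are row vectors 'rV[F]_3; coordinates indexed by 'I_3
   (index 0,1,2 correspond to the paper's 1,2,3). *)

Section Defs.
Variable F : finFieldType.

Definition hamming (u v : 'rV[F]_3) : nat := #|[set i : 'I_3 | u 0 i != v 0 i]|.

Definition weight (u : 'rV[F]_3) : nat := #|[set i : 'I_3 | u 0 i != 0]|.

Definition ball1 (u : 'rV[F]_3) : {set 'rV[F]_3} := [set v | (hamming u v <= 1)%N].

Definition Eext (u : 'rV[F]_3) : {set 'rV[F]_3} := \bigcup_(l : F) ball1 (l *: u).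

Definition short_covering (H : {set 'rV[F]_3}) : Prop :=
  \bigcup_(h in H) Eext h = [set: 'rV[F]_3].

Definition monomial_map (s : 'S_3) (a : 'I_3 -> F) (u : 'rV[F]_3) : 'rV[F]_3 :=
  \row_(i < 3) (a i * u 0 (s i)).

Definition Fq_equivalent (H H' : {set 'rV[F]_3}) : Prop :=
  exists (s : 'S_3) (a : 'I_3 -> F),
    (forall i, a i != 0) /\ [set monomial_map s a h | h in H] = H'.

Definition all_ones : 'rV[F]_3 := \row_(i < 3) 1.

Definition form1 (H' : {set 'rV[F]_3}) : Prop :=
  exists h1 h2 h3 h4,
    [/\ [/\ h1 \in H', h2 \in H', h3 \in H' & h4 \in H'],
        uniq [:: h1; h2; h3; h4],
        h1 = all_ones &
        [/\ h2 0 0 = 0, h3 0 1 = 0 & h4 0 2 = 0]].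

Definition form2 (H' : {set 'rV[F]_3}) : Prop :=
  exists h1 h2 h3,
    [/\ [/\ h1 \in H', h2 \in H' & h3 \in H'],
        uniq [:: h1; h2; h3],
        h1 = all_ones &
        [/\ h2 0 0 = 0, h3 0 1 = 0 & h3 0 2 = 0]].

End Defs.

From HB Require Import structures.
From mathcomp Require Import all_boot all_order all_algebra all_fingroup.
From mathcomp Require Import zify.
Set Implicit Arguments.
Unset Strict Implicit.
Unset Printing Implicit Defensive.

Import GRing.Theory.
Local Open Scope ring_scope.

(* A vector v lies in E(h) iff, away from some coordinate j, v is a scalar
   multiple of h.  If h_j = 0, every v in E(h) with v_j <> 0 is therefore a
   multiple of h off j, so E(h) contains at most q-1 of the (q-1)^2 vectors
   (1,x,y) with x, y <> 0: a short covering without a vector of weight 3 has at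
   least q-1 elements.  Likewise, if no nonzero vector of H vanishes at j, each
   E(h) contains at most one of the q-1 vectors with v_j = 0, v_i = 1, v_k <> 0.
   As m = ceil((q+1)/2) < q-1 once q >= 5, this gives (1), and (2) with nonzero
   vectors.  For (3), rescale the coordinates so that the weight-3 vector
   becomes (1,1,1); the nonzero vectors vanishing at coordinates 1, 2, 3 are
   either pairwise distinct (form H_1), or two coincide in a vector of weight 1,
   which a transposition of coordinates moves to (c,0,0) (form H_2). *)

Lemma ord3P (l : 'I_3) : [\/ l = 0, l = 1 | l = 2].
Proof.
by case: l => [[|[|[|]]] //= Hl]; [constructor 1|constructor 2|constructor 3];
  apply/val_inj.
Qed.

Lemma ord3_others (j : 'I_3) : exists i k : 'I_3, [/\ i != j, k != j & i != k].
Proof. by case: (ord3P j) => ->; [exists 1, 2|exists 0, 2|exists 0, 1]. Qed.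

Lemma ord3_third (i j k l : 'I_3) :
  i != j -> k != i -> k != j -> l != i -> l != j -> l = k.
Proof.
by case: (ord3P i) (ord3P j) (ord3P k) (ord3P l) => -> [] -> [] -> [] ->.
Qed.

Lemma card_bigcup_leq {I T : finType} (P : pred I) (G : I -> {set T}) :
  (#|\bigcup_(i | P i) G i| <= \sum_(i | P i) #|G i|)%N.
Proof.
elim/big_rec2: _ => [|i A n _ IH]; first by rewrite cards0.
by apply: leq_trans (leq_card_setU _ _).1 _; rewrite leq_add2l.
Qed.

Lemma half_lt_pred q : (5 <= q)%N -> ((q + 2) %/ 2 < q.-1)%N.
Proof. by move=> *; lia. Qed.

Section ShortCovering.
Variable F : finFieldType.
Implicit Types (u v h : 'rV[F]_3) (H : {set 'rV[F]_3}).
Implicit Types (s : 'S_3) (a : 'I_3 -> F).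

Lemma hamming_le1_agree u v :
  (hamming u v <= 1)%N -> exists j, forall i, i != j -> u 0 i = v 0 i.
Proof.
move=> /card_le1_eqP D1.
case: (pickP [pred i | u 0 i != v 0 i]) => [j dj | agree]; last first.
  by exists 0 => i _; apply/eqP/negbFE; exact: agree.
by exists j => i; apply: contraNeq => di; apply/eqP/D1; rewrite inE.
Qed.

Definition scaled_off (j : 'I_3) h v :=
  exists l : F, forall i, i != j -> v 0 i = l * h 0 i.

Lemma Eext_scaled_off h v : v \in Eext h -> exists j, scaled_off j h v.
Proof.
case/bigcupP=> l _; rewrite inE => /hamming_le1_agree[j agree].
by exists j, l => i /agree <-; rewrite mxE.
Qed.

Lemma scaled_off_at_zero j' j h v :
  scaled_off j' h v -> h 0 j = 0 -> v 0 j != 0 -> j' = j.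
Proof.
move=> [l vh] hj; apply: contraNeq => j'j.
by rewrite vh 1?eq_sym // hj mulr0.
Qed.

Lemma scaled_off_at_nonzero j' j i k h v :
  scaled_off j' h v -> h = 0 \/ h 0 j != 0 -> v 0 j = 0 ->
  v 0 i != 0 -> v 0 k != 0 -> i != k -> j' = j.
Proof.
(* Otherwise l * h_j = v_j = 0 forces l *: h = 0, which kills v_i or v_k. *)
move=> [l vh] hj vj vi vk ik; apply/eqP; apply: contraT => j'j.
have lh0 n : l * h 0 n = 0.
  case: hj => [-> | hj]; first by rewrite mxE mulr0.
  move: vj; rewrite vh 1?eq_sym // => /eqP; rewrite mulf_eq0 (negPf hj) orbF.
  by move/eqP->; rewrite mul0r.
case: (eqVneq i j') => [ij' | ij']; last by rewrite vh ?lh0 ?eqxx in vi.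
by move: vk; rewrite vh ?lh0 ?eqxx // -ij' eq_sym.
Qed.

Lemma scaled_off_coord_eq j i k h v v' :
  scaled_off j h v -> scaled_off j h v' -> i != j -> k != j ->
  v 0 i = v' 0 i -> v 0 i != 0 -> v 0 k = v' 0 k.
Proof.
move=> [l vh] [l' v'h] ij kj; rewrite vh // v'h // vh // v'h //.
move=> eq_i; rewrite eq_i mulf_eq0 negb_or => /andP[_ hi].
by rewrite (mulIf hi eq_i).
Qed.

Lemma card_le_covering H (T : finType) (w : T -> 'rV[F]_3) (A : {set T}) b :
  short_covering H ->
  (forall h, h \in H -> #|[set p in A | w p \in Eext h]| <= b)%N ->
  (#|A| <= #|H| * b)%N.
Proof.
move=> cov bound.
have sub : A \subset \bigcup_(h in H) [set p in A | w p \in Eext h].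
  apply/subsetP => p pA; have : w p \in [set: 'rV[F]_3] by rewrite inE.
  rewrite -cov => /bigcupP[h hH ph].
  by apply/bigcupP; exists h => //; rewrite inE pA.
rewrite -sum_nat_const; apply: leq_trans (subset_leq_card sub) _.
have := card_bigcup_leq (mem H) (fun h => [set p in A | w p \in Eext h]).
move=> /leq_trans; apply; exact: leq_sum.
Qed.

Lemma weight3P h : reflect (forall i, h 0 i != 0) (weight h == 3%N).
Proof.
apply: (iffP eqP) => [w3 i | nz].
  have: [set i | h 0 i != 0] = setT.
    apply/eqP; rewrite eqEcard subsetT cardsT card_ord.
    by move: w3; rewrite /weight => ->.
  by move/setP/(_ i); rewrite !inE.
rewrite /weight (_ : [set i | _] = setT) ?cardsT ?card_ord //.
by apply/setP => i; rewrite !inE nz.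
Qed.

Definition row1xy (p : F * F) : 'rV[F]_3 := \row_(i < 3) [:: 1; p.1; p.2]`_i.

Definition nonzero : {set F} := [set~ 0].

Definition nonzero_pairs : {set F * F} := setX nonzero nonzero.

Lemma card_row1xy_in_Eext h (j : 'I_3) : h 0 j = 0 ->
  (#|[set p in nonzero_pairs | row1xy p \in Eext h]| <= #|F|.-1)%N.
Proof.
move=> hj; set Th := [set p in _ | _].
have nz p c : p \in Th -> row1xy p 0 c != 0.
  rewrite !inE => /andP[/andP[x0 y0] _].
  by case: (ord3P c) => ->; rewrite mxE //= oner_eq0.
have sc p : p \in Th -> scaled_off j h (row1xy p).
  move=> pTh; move: (pTh); rewrite inE => /andP[_ /Eext_scaled_off[j' s]].
  by have ej := scaled_off_at_zero s hj (nz _ _ pTh); rewrite ej in s.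
have inj_bound (c : 'I_3) :
    {in Th &, injective (fun p => row1xy p 0 c)} -> (#|Th| <= #|F|.-1)%N.
  move=> inj; rewrite -(card_in_imset inj) -(cardsC1 (0 : F)).
  apply: subset_leq_card.
  by apply/subsetP => _ /imsetP[p pTh ->]; rewrite !inE nz.
have coord_eq i k p p' : p \in Th -> p' \in Th -> i != j -> k != j ->
    row1xy p 0 i = row1xy p' 0 i ->
    row1xy p 0 k = row1xy p' 0 k.
  by move=> pTh p'Th ij kj e; apply: scaled_off_coord_eq ij kj e (nz _ _ pTh);
    apply: sc.
(* For j != 0 the coordinates other than j are fixed by the leading 1, so p is
   determined by its j-th coordinate; for j = 0, y is determined by x. *)
case: (ord3P j) => ej; rewrite {}ej in coord_eq.
- apply: (inj_bound 1) => -[x y] [x' y'] pTh p'Th ex.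
  have := coord_eq 1 2 _ _ pTh p'Th isT isT ex.
  by move: ex; rewrite !mxE /= => -> ->.
- apply: (inj_bound 1) => -[x y] [x' y'] pTh p'Th ex.
  have := coord_eq 0 2 _ _ pTh p'Th isT isT; rewrite !mxE /= => /(_ erefl).
  by move: ex; rewrite !mxE /= => -> ->.
- apply: (inj_bound 2) => -[x y] [x' y'] pTh p'Th ey.
  have := coord_eq 0 1 _ _ pTh p'Th isT isT; rewrite !mxE /= => /(_ erefl).
  by move: ey; rewrite !mxE /= => -> ->.
Qed.

Lemma short_covering_weight3 H :
  (#|H| < #|F|.-1)%N -> short_covering H -> exists2 h, h \in H & weight h = 3%N.
Proof.
move=> small cov.
suff /exists_inP[h hH /eqP w3] : [exists h in H, weight h == 3%N] by exists h.
apply: contraLR small => /exists_inPn no; rewrite -leqNgt.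
have q1_gt0 : (0 < #|F|.-1)%N.
  rewrite -(cardsC1 (0 : F)) card_gt0; apply/set0Pn.
  by exists 1; rewrite !inE oner_eq0.
rewrite -(leq_pmul2r q1_gt0) -{1 2}(cardsC1 (0 : F)) -cardsX.
apply: card_le_covering cov _ => h hH.
have /existsP[j /eqP hj] : [exists j, h 0 j == 0].
  by apply: contraR (no h hH) => /existsPn nz; apply/weight3P => i; apply: nz.
exact: card_row1xy_in_Eext hj.
Qed.

Definition row_zero_one (j i : 'I_3) (y : F) : 'rV[F]_3 :=
  \row_l (if l == j then 0 else if l == i then 1 else y).

Lemma card_row_zero_one_in_Eext h (j i k : 'I_3) :
  i != j -> k != j -> i != k -> h = 0 \/ h 0 j != 0 ->
  (#|[set y in nonzero | row_zero_one j i y \in Eext h]| <= 1)%N.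
Proof.
move=> ij kj ik hj.
have coords z : [/\ row_zero_one j i z 0 j = 0, row_zero_one j i z 0 i = 1
                  & row_zero_one j i z 0 k = z].
  by rewrite !mxE eqxx (negPf ij) eqxx (negPf kj) eq_sym (negPf ik).
have sc z : z != 0 -> row_zero_one j i z \in Eext h ->
    scaled_off j h (row_zero_one j i z).
  move=> z0 /Eext_scaled_off[j' s]; have [vj vi vk] := coords z.
  have vi0 : row_zero_one j i z 0 i != 0 by rewrite vi oner_eq0.
  have vk0 : row_zero_one j i z 0 k != 0 by rewrite vk.
  by have ej := scaled_off_at_nonzero s hj vj vi0 vk0 ik; rewrite ej in s.
apply/card_le1_eqP => y y'; rewrite !inE => /andP[y0 Hy] /andP[y'0 Hy'].
have [_ vi vk] := coords y; have [_ vi' vk'] := coords y'.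
rewrite -vk' -vk.
apply: scaled_off_coord_eq (sc _ y'0 Hy') (sc _ y0 Hy) ij kj _ _.
  by rewrite vi vi'.
by rewrite vi' oner_eq0.
Qed.

Lemma short_covering_zero_coord H j :
  (#|H| < #|F|.-1)%N -> short_covering H ->
  exists2 h, h \in H & (h != 0) && (h 0 j == 0).
Proof.
move=> small cov.
suff /exists_inP[h hH hj] : [exists h in H, (h != 0) && (h 0 j == 0)].
  by exists h.
apply: contraLR small => /exists_inPn no; rewrite -leqNgt -[#|H|]muln1.
have [i [k [ij kj ik]]] := ord3_others j.
rewrite -(cardsC1 (0 : F)); apply: card_le_covering cov _ => h hH.
apply: card_row_zero_one_in_Eext ij kj ik _.
by move: (no h hH); rewrite negb_and negbK => /orP[/eqP|]; [left|right].
Qed.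

Lemma weight3_neq h u i : weight h = 3%N -> u 0 i = 0 -> h != u.
Proof.
by move/eqP/weight3P/(_ i) => hi ui; apply: contraNneq hi => ->; rewrite ui.
Qed.

Lemma monomial_map_inj s a :
  (forall i, a i != 0) -> injective (monomial_map s a).
Proof.
move=> a_nz u v /rowP uv; apply/rowP => l.
by have := uv (s^-1 l)%g; rewrite !mxE permKV; apply: mulfI.
Qed.

Lemma monomial_map_all_ones s h :
  weight h = 3%N ->
  (forall i, (h 0 (s i))^-1 != 0) /\
  monomial_map s (fun i => (h 0 (s i))^-1) h = @all_ones F.
Proof.
move/eqP/weight3P => nz; split => [i|]; first by rewrite invr_eq0.
by apply/rowP => i; rewrite !mxE mulVf.
Qed.

Lemma Fq_equivalent_form1 H h1 u0 u1 u2 :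
  h1 \in H -> weight h1 = 3%N -> u0 \in H -> u1 \in H -> u2 \in H ->
  u0 0 0 = 0 -> u1 0 1 = 0 -> u2 0 2 = 0 -> uniq [:: u0; u1; u2] ->
  exists H', Fq_equivalent H H' /\ form1 H'.
Proof.
move=> h1H w3 u0H u1H u2H z0 z1 z2 U.
have [a_nz ones] := monomial_map_all_ones 1%g w3.
set M := monomial_map _ _ in ones.
exists (M @: H); split.
  by exists 1%g, (fun i => (h1 0 ((1%g : 'S_3) i))^-1).
exists (M h1), (M u0), (M u1), (M u2); split => //.
- by split; apply: imset_f.
- have U' : uniq [:: h1; u0; u1; u2].
    by rewrite cons_uniq U andbT !inE !negb_or (weight3_neq w3 z0)
      (weight3_neq w3 z1) (weight3_neq w3 z2).
  by rewrite -(map_inj_uniq (monomial_map_inj (s := 1%g) a_nz)) in U'.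
- by rewrite !mxE !perm1 z0 z1 z2 !mulr0.
Qed.

Lemma Fq_equivalent_form2 H h1 u v (i j k : 'I_3) :
  i != j -> k != i -> k != j ->
  h1 \in H -> weight h1 = 3%N -> u \in H -> v \in H ->
  u != 0 -> u 0 i = 0 -> u 0 j = 0 -> v 0 k = 0 ->
  exists H', Fq_equivalent H H' /\ form2 H'.
Proof.
move=> ij ki kj h1H w3 uH vH u_nz ui uj vk.
have u_off_k l : l != k -> u 0 l = 0.
  move=> lk; case: (eqVneq l i) => [-> // | li].
  case: (eqVneq l j) => [-> // | lj].
  by rewrite (ord3_third ij ki kj li lj) eqxx in lk.
have uk : u 0 k != 0.
  apply: contraNneq u_nz => uk; apply/eqP/rowP => l; rewrite mxE.
  by case: (eqVneq l k) => [-> // | lk]; apply: u_off_k.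
pose s := tperm 0 k.
have s0 : s 0 = k by rewrite tpermL.
have us l : l != 0 -> u 0 (s l) = 0.
  by move=> l0; apply: u_off_k; rewrite -s0 (inj_eq perm_inj).
have [a_nz ones] := monomial_map_all_ones s w3.
set M := monomial_map _ _ in ones.
exists (M @: H); split; first by exists s, (fun i => (h1 0 (s i))^-1).
exists (M h1), (M v), (M u); split => //.
- by split; apply: imset_f.
- have U : uniq [:: h1; v; u].
    rewrite /= !inE negb_or (weight3_neq w3 vk) (weight3_neq w3 ui) !andbT.
    by apply: contraNneq uk => <-; rewrite vk.
  by rewrite -(map_inj_uniq (monomial_map_inj (s := s) a_nz)) in U.
- by rewrite !mxE s0 vk !us ?mulr0.
Qed.

Lemma Fq_equivalent_form1_or_form2 H h1 u0 u1 u2 :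
  h1 \in H -> weight h1 = 3%N -> u0 \in H -> u1 \in H -> u2 \in H ->
  u0 != 0 -> u1 != 0 -> u2 != 0 -> u0 0 0 = 0 -> u1 0 1 = 0 -> u2 0 2 = 0 ->
  exists H', Fq_equivalent H H' /\ (form1 H' \/ form2 H').
Proof.
move=> h1H w3 u0H u1H u2H nz0 nz1 nz2 z0 z1 z2.
have form2_case u v (i j k : 'I_3) : i != j -> k != i -> k != j ->
    u \in H -> v \in H -> u != 0 -> u 0 i = 0 -> u 0 j = 0 -> v 0 k = 0 ->
    exists H', Fq_equivalent H H' /\ (form1 H' \/ form2 H').
  move=> ij ki kj uH vH unz ui uj vk.
  have [H' [eqv f2]] := Fq_equivalent_form2 ij ki kj h1H w3 uH vH unz ui uj vk.
  by exists H'; split; [|right].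
case: (eqVneq u0 u1) => [e01 | n01].
  by apply: (form2_case u0 u2 0 1 2) => //; rewrite e01.
case: (eqVneq u0 u2) => [e02 | n02].
  by apply: (form2_case u0 u1 0 2 1) => //; rewrite e02.
case: (eqVneq u1 u2) => [e12 | n12].
  by apply: (form2_case u1 u0 1 2 0) => //; rewrite e12.
have U : uniq [:: u0; u1; u2] by rewrite /= !inE negb_or n01 n02 n12.
have [H' [eqv f1]] := Fq_equivalent_form1 h1H w3 u0H u1H u2H z0 z1 z2 U.
by exists H'; split; [|left].
Qed.

End ShortCovering.

Theorem theorem18 (F : finFieldType) (H : {set 'rV[F]_3}) :
  (7 <= #|F|)%N ->
  #|H| = ((#|F| + 2) %/ 2)%N ->
  short_covering H ->
  [/\ (exists2 h, h \in H & weight h = 3%N),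
      (forall j : 'I_3, exists2 h, h \in H & h 0 j = 0) &
      (exists H' : {set 'rV[F]_3}, Fq_equivalent H H' /\ (form1 H' \/ form2 H'))].
Proof.
move=> q7 Hm cov.
have small : (#|H| < #|F|.-1)%N by rewrite Hm half_lt_pred // (leq_trans _ q7).
have [h1 h1H w3] := short_covering_weight3 small cov.
have zero_coord j := short_covering_zero_coord j small cov.
have [u0 u0H /andP[nz0 /eqP z0]] := zero_coord 0.
have [u1 u1H /andP[nz1 /eqP z1]] := zero_coord 1.
have [u2 u2H /andP[nz2 /eqP z2]] := zero_coord 2.
split; first by exists h1.
  by move=> j; have [h hH /andP[_ /eqP hj]] := zero_coord j; exists h.
exact: Fq_equivalent_form1_or_form2 h1H w3 u0H u1H u2H nz0 nz1 nz2 z0 z1 z2.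
Qed.
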